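(* Let $n\in\mathbb{N}$, $A_n=\{(i,j)\in\mathbb{Z}^2:0\le i,j\le 14n\}$ and $\tau(x,y)=(x,(28n)^y)$. Let $p_1=(a_1,b_1)$, $p_2=(a_2,b_2)$, $p_3=(a_3,b_3)\in A_n$ with $\max(b_1,b_2)<b_3$, and let $\Box=(\min(a_1,a_2),\max(a_1,a_2))\times(\max(b_1,b_2),b_3)$ (an open axis-aligned rectangle, possibly empty). Then for every $p\in A_n\cap\Box$, the point $\tau(p)$ lies in the interior of the triangle with vertices $\tau(p_1),\tau(p_2),\tau(p_3)$. *)

From mathcomp Require Import all_boot all_order all_algebra.
Set Implicit Arguments. Unset Strict Implicit. Unset Printing Implicit Defensive.
Import Order.TTheory GRing.Theory Num.Theory.
Local Open Scope ring_scope.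

Definition in_A (n : nat) (p : int * int) : bool :=
  (0 <= p.1 <= (14 * n)%:Z) && (0 <= p.2 <= (14 * n)%:Z).

Definition tau (R : realFieldType) (n : nat) (p : int * int) : R * R :=
  (p.1%:~R, ((28 * n)%:R : R) ^ p.2).

Definition in_box (p1 p2 p3 p : int * int) : bool :=
  (Num.min p1.1 p2.1 < p.1 < Num.max p1.1 p2.1) &&
  (Num.max p1.2 p2.2 < p.2 < p3.2).

(* Interior of the triangle with vertices a b c in R^2: the triangle is
   nondegenerate and q is a convex combination with strictly positive weights. *)
Definition in_triangle_interior (R : realFieldType) (a b c q : R * R) : Prop :=
  ((b.1 - a.1) * (c.2 - a.2) - (b.2 - a.2) * (c.1 - a.1) != 0) /\
  exists l1 l2 l3 : R, [/\ 0 < l1, 0 < l2, 0 < l3 & l1 + l2 + l3 = 1] /\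
     q.1 = l1 * a.1 + l2 * b.1 + l3 * c.1 /\
     q.2 = l1 * a.2 + l2 * b.2 + l3 * c.2.

From mathcomp Require Import all_boot all_order all_algebra ring lra zify.
Import Order.TTheory GRing.Theory Num.Theory.
Local Open Scope ring_scope.

(* The image under tau of a column of the box, (x, B^y) with B = 28n, is
   squeezed between the images of p1, p2 (a factor B below) and of p3
   (a factor B above).  Since B is twice the width 14n of the grid, the
   triangle is so tall and thin that all three signed areas obtained by
   replacing a vertex with tau(p) are positive, i.e. the barycentric
   coordinates of tau(p) are positive. *)

Section Barycentric.
Variable R : realFieldType.

Definition signed_area (a b c : R * R) : R :=
  (b.1 - a.1) * (c.2 - a.2) - (b.2 - a.2) * (c.1 - a.1).

Lemma in_triangle_interior_swap12 (a b c q : R * R) :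
  in_triangle_interior a b c q -> in_triangle_interior b a c q.
Proof.
case=> nondeg [l1 [l2 [l3 [[l1_gt0 l2_gt0 l3_gt0 sum1] [q1E q2E]]]]].
split.
  change (signed_area b a c != 0).
  have -> : signed_area b a c = - signed_area a b c by rewrite /signed_area; ring.
  by rewrite oppr_eq0.
exists l2, l1, l3; split; first by split => //; rewrite -sum1; ring.
by rewrite q1E q2E; split; ring.
Qed.

(* The barycentric coordinates of q are its three sub-areas divided by the
   area of the triangle (Cramer's rule). *)
Lemma signed_areas_in_triangle_interior (a b c q : R * R) :
  0 < signed_area a b c -> 0 < signed_area q b c ->
  0 < signed_area a q c -> 0 < signed_area a b q ->
  in_triangle_interior a b c q.
Proof.
move=> D_gt0 A1_gt0 A2_gt0 A3_gt0; split; first exact: lt0r_neq0.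
exists (signed_area q b c / signed_area a b c),
  (signed_area a q c / signed_area a b c),
  (signed_area a b q / signed_area a b c).
split; first split; try exact: divr_gt0.
all: move: D_gt0 (lt0r_neq0 D_gt0); rewrite /signed_area.
all: case: a b c q {A1_gt0 A2_gt0 A3_gt0} => [a1 a2] [b1 b2] [c1 c2] [q1 q2] /= _ D_neq0.
- by field.
- by split; apply/eqP; rewrite -subr_eq0; apply/eqP; field.
Qed.

End Barycentric.

Lemma tall_triangle_interior (R : realFieldType) (K a1 a2 a3 x h1 h2 h3 Y : R) :
  1 <= K -> 0 <= a1 <= K -> 0 <= a2 <= K -> 0 <= a3 <= K ->
  a1 + 1 <= x -> x + 1 <= a2 -> 0 < h1 -> 0 < h2 ->
  2 * K * h1 <= Y -> 2 * K * h2 <= Y -> 2 * K * Y <= h3 ->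
  in_triangle_interior (a1, h1) (a2, h2) (a3, h3) (x, Y).
Proof.
move=> K_ge1 /andP[a1_ge0 a1_leK] /andP[a2_ge0 a2_leK] /andP[a3_ge0 a3_leK].
move=> a1_x x_a2 h1_gt0 h2_gt0 h1_Y h2_Y Y_h3.
have Y_gt0 : 0 < Y by nra.
have h3_ge2Y : 2 * Y <= h3 by nra.
apply: signed_areas_in_triangle_interior; rewrite /signed_area /=.
- have cross_le : (h2 - h1) * (a3 - a1) <= K * h2 + K * h1.
    have : h2 * (a3 - a1) <= h2 * K by rewrite ler_pM2l //; lra.
    have : h1 * (a1 - a3) <= h1 * K by rewrite ler_pM2l //; lra.
    lra.
  nra.
- nra.
- nra.
- nra.
Qed.

Lemma ler_mulXz (R : realFieldType) (B : R) (m k : int) :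
  1 <= B -> m < k -> B * B ^ m <= B ^ k.
Proof.
move=> B_ge1 lt_mk; rewrite -[X in X * _]expr1z -exprzDr; last first.
  by rewrite unitfE; apply: lt0r_neq0; lra.
by apply: ler_weXz2l => //; rewrite addrC lezD1.
Qed.

Lemma ler_intD1 (R : realFieldType) (u v : int) : u < v -> (u%:~R : R) + 1 <= v%:~R.
Proof. by rewrite -lezD1 -(ler_int R) intrD. Qed.

Lemma in_A_tau_abscissa (R : realFieldType) (n : nat) (p : int * int) :
  in_A n p -> 0 <= (tau R n p).1 <= (14 * n)%:R.
Proof.
case/andP => /andP[p1_ge0 p1_le] _.
by rewrite /= ler0z p1_ge0 -(ler_int R) in p1_le *.
Qed.

Lemma tau_height_gt0 (R : realFieldType) (n : nat) (p : int * int) :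
  (0 < n)%N -> 0 < (tau R n p).2.
Proof. by move=> n_gt0; rewrite exprz_gt0 // ltr0n muln_gt0. Qed.

Lemma tau_height_gap (R : realFieldType) (n : nat) (p q : int * int) :
  (0 < n)%N -> p.2 < q.2 -> 2 * (14 * n)%:R * (tau R n p).2 <= (tau R n q).2.
Proof.
move=> n_gt0 lt_pq; rewrite -natrM mulnA; apply: ler_mulXz => //.
by rewrite ler1n muln_gt0.
Qed.

Lemma tau_in_triangle_interior_ordered (R : realFieldType) (n : nat)
    (p1 p2 p3 p : int * int) :
  in_A n p1 -> in_A n p2 -> in_A n p3 ->
  p1.1 < p.1 < p2.1 -> p1.2 < p.2 -> p2.2 < p.2 -> p.2 < p3.2 ->
  in_triangle_interior (tau R n p1) (tau R n p2) (tau R n p3) (tau R n p).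
Proof.
move=> A1 A2 A3 /andP[lt1 lt2] lt_1 lt_2 lt_3.
have n_gt0 : (0 < n)%N.
  move: A1 A3 => /andP[_ /andP[b1_ge0 _]] /andP[_ /andP[_ b3_le]]; lia.
apply: (@tall_triangle_interior R (14 * n)%:R).
- by rewrite ler1n muln_gt0.
- exact: in_A_tau_abscissa.
- exact: in_A_tau_abscissa.
- exact: in_A_tau_abscissa.
- exact: ler_intD1.
- exact: ler_intD1.
- exact: tau_height_gt0.
- exact: tau_height_gt0.
- exact: tau_height_gap.
- exact: tau_height_gap.
- exact: tau_height_gap.
Qed.

Theorem lemma8 (R : realFieldType) (n : nat) (p1 p2 p3 : int * int) :
  in_A n p1 -> in_A n p2 -> in_A n p3 ->
  Num.max p1.2 p2.2 < p3.2 ->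
  forall p : int * int, in_A n p -> in_box p1 p2 p3 p ->
  in_triangle_interior (tau R n p1) (tau R n p2) (tau R n p3) (tau R n p).
Proof.
move=> A1 A2 A3 _ p _ /andP[/andP[min_lt lt_max] /andP[max_lt lt3]].
move: max_lt; rewrite gt_max => /andP[lt1 lt2].
have [le12|lt21] := leP p1.1 p2.1.
  move: min_lt lt_max; rewrite min_l // max_r // => lt_1 lt_2.
  by apply: tau_in_triangle_interior_ordered; rewrite ?lt_1.
move: min_lt lt_max; rewrite min_r ?max_l ?ltW // => lt_2 lt_1.
by apply/in_triangle_interior_swap12/tau_in_triangle_interior_ordered; rewrite ?lt_2.
Qed.
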